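(* Let $\gamma\in\{\tfrac12,1,\dots\}$, $j\in\{-\tfrac12,0,\tfrac12,\dots\}$ with $j>\gamma-1$, and let $|\psi_{(\mu)}\rangle\in F_\gamma\otimes D^+_j$, $\mu\in\{-\gamma,\dots,\gamma\}$, be the vectors $$|\psi_{(\mu)}\rangle=\sum_{\nu=-\gamma}^{\mu}(-1)^{\gamma+\nu}\prod_{\sigma=-\gamma}^{\nu-1}\frac{\Gamma_+(j,j+\mu-\sigma)}{\Gamma_+(\gamma,\sigma)}\,|\gamma,\nu\rangle\otimes|j,j+1+\mu-\nu\rangle.$$ Then $(J_+)^n|\psi_{(\mu)}\rangle\neq0$ for every $n\in\mathbb N$ and every $\mu$.
   Context: Let $\mathfrak{spin}(2,1)_{\mathbb C}$ have basis $J_0,J_+,J_-$ with $[J_0,J_\pm]=\pm J_\pm$, $[J_+,J_-]=-2J_0$, and Casimir $Q=-J_0(J_0-1)+J_+J_-=-J_0(J_0+1)+J_-J_+$. Set $\Gamma_\pm(j,m)=\mathrm i\sqrt{j\mp m}\,\sqrt{j\pm m+1}$. A module with basis $\{|j,m\rangle\}$ has action $J_0|j,m\rangle=m|j,m\rangle$, $J_\pm|j,m\rangle=\Gamma_\pm(j,m)|j,m\pm1\rangle$. The positive discrete series module $D^+_j$ has basis $|j,m\rangle$, $m\in\{j+1,j+2,\dots\}$; the finite-dimensional module $F_\gamma$ has basis $|\gamma,\mu\rangle$, $\mu\in\{-\gamma,\dots,\gamma\}$. On a tensor product the generators act as $J_0\otimes1+1\otimes J_0$, $J_\pm\otimes1+1\otimes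 J_\pm$. *)

From HB Require Import structures.
From mathcomp Require Import all_boot all_order all_algebra all_field.
Set Implicit Arguments. Unset Strict Implicit. Unset Printing Implicit Defensive.
Import Order.TTheory GRing.Theory Num.Theory.
Local Open Scope ring_scope.

Definition Gp (j m : algC) : algC := 'i * sqrtC (j - m) * sqrtC (j + m + 1).

(* gamma = g/2 (g >= 1),  j = (k-1)/2 (k >= 0) *)
Definition gam (g : nat) : algC := g%:R / 2%:R.
Definition jj (k : nat) : algC := (k%:R - 1) / 2%:R.

(* basis of F_gamma (x) D^+_j : |gamma, nu_a> (x) |j, m_b>,
   nu_a = -gamma + a (a = 0..g),  m_b = j + 1 + b (b in nat) *)
Definition nu (g a : nat) : algC := - gam g + a%:R.
Definition mm (k b : nat) : algC := jj k + 1 + b%:R.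

(* vectors of F_gamma (x) D^+_j, given by their coefficients on the basis *)
Definition vec (g : nat) := 'I_g.+1 -> nat -> algC.

(* J_+ = J_+ (x) 1 + 1 (x) J_+ acting coefficientwise:
   J_+ |g,nu>|j,m> = Gp(g,nu) |g,nu+1>|j,m> + Gp(j,m) |g,nu>|j,m+1> *)
Definition Jplus (g k : nat) (f : vec g) : vec g := fun a b =>
  (if (a : nat) is a'.+1 then Gp (gam g) (nu g a') * f (inord a') b else 0)
  + (if b is b'.+1 then Gp (jj k) (mm k b') * f a b' else 0).

(* |psi_(mu)>, mu = -gamma + c, c = 0..g:
   sum_{nu=-gamma}^{mu} (-1)^(gamma+nu) prod_{sigma=-gamma}^{nu-1}
      Gp(j, j+mu-sigma)/Gp(gamma,sigma) |gamma,nu> (x) |j, j+1+mu-nu>  *)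
Definition psi (g k : nat) (c : 'I_g.+1) : vec g := fun a b =>
  if ((a : nat) <= c)%N && (b == c - a)%N then
    (-1) ^+ a * \prod_(s < a)
        (Gp (jj k) (jj k + nu g c - nu g s) / Gp (gam g) (nu g s))
  else 0.

(* The component of a vector along |gamma,-gamma> is changed by J_+ only
   through the factor D^+_j, since J_+ never lowers nu.  The vector
   |psi_(mu)> has coefficient 1 on |gamma,-gamma> (x) |j,j+1+mu+gamma>, and
   the raising coefficients Gamma_+(j,m) of D^+_j, m >= j+1, never vanish.
   Hence the coefficient of (J_+)^n |psi_(mu)> on
   |gamma,-gamma> (x) |j,j+1+mu+gamma+n> is a product of nonzero numbers. *)
From HB Require Import structures.
From mathcomp Require Import all_boot all_order all_algebra all_field.
From mathcomp Require Import ring.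
Import Order.TTheory GRing.Theory Num.Theory.
Local Open Scope ring_scope.

Lemma Gp_eq0 (j m : algC) : (Gp j m == 0) = (j - m == 0) || (j + m + 1 == 0).
Proof. by rewrite /Gp !mulf_eq0 (negPf (neq0Ci _)) !sqrtC_eq0. Qed.

Lemma jj_sub_mm (k b : nat) : jj k - mm k b = - (b.+1)%:R.
Proof. by rewrite /mm -addn1 natrD; ring. Qed.

Lemma jj_add_mm_add1 (k b : nat) : jj k + mm k b + 1 = (k + b).+1%:R.
Proof. by rewrite /mm /jj -addn1 !natrD; field. Qed.

Lemma Gp_jj_mm_neq0 (k b : nat) : Gp (jj k) (mm k b) != 0.
Proof. by rewrite Gp_eq0 jj_sub_mm jj_add_mm_add1 oppr_eq0 !pnatr_eq0. Qed.

Lemma Jplus_ord0S (g k : nat) (f : vec g) (b : nat) :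
  Jplus k f ord0 b.+1 = Gp (jj k) (mm k b) * f ord0 b.
Proof. by rewrite /Jplus /= add0r. Qed.

Lemma iter_Jplus_ord0 (g k : nat) (f : vec g) (b n : nat) :
  iter n (Jplus k) f ord0 (b + n)%N =
  (\prod_(i < n) Gp (jj k) (mm k (b + i)%N)) * f ord0 b.
Proof.
elim: n => [|n IHn]; first by rewrite big_ord0 addn0 mul1r.
by rewrite iterS addnS Jplus_ord0S IHn big_ord_recr mulrA [Gp _ _ * _]mulrC.
Qed.

Lemma psi_ord0 (g k : nat) (c : 'I_g.+1) : psi k c ord0 c = 1.
Proof. by rewrite /psi /= subn0 eqxx big_ord0 mulr1. Qed.

Theorem mainTheorem4 (g k : nat) :
  (1 <= g)%N -> gam g - 1 < jj k ->
  forall (n : nat) (c : 'I_g.+1),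
    ~ (forall (a : 'I_g.+1) (b : nat), iter n (Jplus k) (psi k c) a b = 0).
Proof.
move=> _ _ n c psi_n_eq0.
have /eqP := psi_n_eq0 ord0 (c + n)%N.
rewrite iter_Jplus_ord0 psi_ord0 mulr1; apply/negP.
by apply/prodf_neq0 => i _; apply: Gp_jj_mm_neq0.
Qed.
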